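(* Let $N\ge1$, $D>0$ a fundamental discriminant with $D\equiv1\pmod{4N}$, $Q=[Na,b,c]\in\mathcal{Q}_{N,D,1}$, $d$ a positive divisor of $N$, and $Q^{(d)}:=[\frac{N}{d}a,b,cd]\in\mathcal{Q}_{N/d,D,1}$. Then the map $(u,v)\mapsto(u,dv)$ induces a bijection between $$\{(u,v)\in\mathbb{Z}^2/\Gamma_0^0(N/d,d)_{Q^{(d)}}:\ Q^{(d)}(u,v)>0,\ \gcd(v,N/d)=1\}$$ and $$\{(u,v)\in\mathbb{Z}^2/\Gamma_0(N)_Q:\ Q(u,v)>0,\ \gcd(v,N)=d\}.$$
   Context: $[a,b,c]=ax^2+bxy+cy^2$; $\mathcal{Q}_{M,D,1}:=\{[Ma,b,c]:a,b,c\in\mathbb{Z},\ b^2-4Mac=D,\ b\equiv1\pmod{2M}\}$. $\Gamma_0^0(N/d,d):=\{\begin{pmatrix}\alpha&\beta\\\gamma&\delta\end{pmatrix}\in\Gamma_0(N/d):\beta\equiv0\pmod d\}$. For a group $G$ of integer matrices of determinant $1$ and a form $P$, $G_P=\{M\in G:P\circ M=P\}$ with $(P\circ M)(x,y)=P(\alpha x+\beta y,\gamma x+\delta y)$, acting on column vectors $(u,v)^T\in\mathbb{Z}^2$ by left multiplication; $\mathbb{Z}^2/G_P$ denotes the orbit set. *)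

From Stdlib Require Import ZArith Lia.
Open Scope Z_scope.

Record form := Form { fa : Z; fb : Z; fc : Z }.
Definition feval (P : form) (x y : Z) : Z :=
  fa P * x * x + fb P * x * y + fc P * y * y.

(* 2x2 integer matrix [[m11, m12], [m21, m22]] = [[alpha,beta],[gamma,delta]]. *)
Record mat := Mat { m11 : Z; m12 : Z; m21 : Z; m22 : Z }.
Definition det1 (M : mat) : Prop := m11 M * m22 M - m12 M * m21 M = 1.

Definition Gamma0 (N : Z) (M : mat) : Prop := det1 M /\ (N | m21 M).
Definition Gamma00 (N' d : Z) (M : mat) : Prop :=
  det1 M /\ (N' | m21 M) /\ (d | m12 M).

Definition fixes (P : form) (M : mat) : Prop :=
  forall x y, feval P (m11 M * x + m12 M * y) (m21 M * x + m22 M * y) = feval P x y.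

Definition act (M : mat) (w : Z * Z) : Z * Z :=
  (m11 M * fst w + m12 M * snd w, m21 M * fst w + m22 M * snd w).

(* w ~ w' in Z^2 / G_P : w' = M w for some M in G_P *)
Definition orbit_rel (G : mat -> Prop) (P : form) (w w' : Z * Z) : Prop :=
  exists M, G M /\ fixes P M /\ w' = act M w.

Definition squarefree (n : Z) : Prop := forall k, (k * k | n) -> k * k = 1.

Definition fundamental_disc (D : Z) : Prop :=
  (D mod 4 = 1 /\ squarefree D) \/
  (exists m, D = 4 * m /\ (m mod 4 = 2 \/ m mod 4 = 3) /\ squarefree m).

From Stdlib Require Import ZArith Lia.
Open Scope Z_scope.

(* With S = diag(1, d), the form Q satisfies Q o S = d * Q^(d), and conjugation
   M |-> S M S^-1, i.e. [[al, d be], [ga, de]] |-> [[al, be], [d ga, de]],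
   maps Gamma_0^0(N/d, d) onto Gamma_0(N) and the stabiliser of Q^(d) onto that
   of Q.  Hence (u, v) |-> S (u, v) = (u, d v) is compatible with both actions,
   and the positivity and gcd conditions correspond because
   Q(u, d v) = d Q^(d)(u, v) and gcd(d v, N) = d gcd(v, N/d). *)

Definition stretch (d : Z) (w : Z * Z) : Z * Z := (fst w, d * snd w).

Definition lift (d : Z) (M : mat) : mat := Mat (m11 M) (d * m12 M) (m21 M) (m22 M).
Definition push (d : Z) (M : mat) : mat := Mat (m11 M) (m12 M) (d * m21 M) (m22 M).

Lemma stretch_inj d w w' : d <> 0 -> stretch d w = stretch d w' -> w = w'.
Proof.
  destruct w as [u v], w' as [u' v']; unfold stretch; simpl.
  intros Hd [= -> Hv]; f_equal; now apply Z.mul_reg_l with d.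
Qed.

Lemma stretch_act_lift d M w :
  stretch d (act (lift d M) w) = act (push d M) (stretch d w).
Proof. unfold stretch, act; simpl; f_equal; ring. Qed.

Lemma det1_lift_push d M : det1 (lift d M) <-> det1 (push d M).
Proof.
  unfold det1; simpl.
  replace (m11 M * m22 M - d * m12 M * m21 M)
    with (m11 M * m22 M - m12 M * (d * m21 M)) by ring.
  reflexivity.
Qed.

Lemma Gamma00_lift k d M :
  Gamma00 k d M -> exists M0, M = lift d M0 /\ Gamma0 (k * d) (push d M0).
Proof.
  destruct M as [al be ga de]; intros (Hdet & Hga & [e He]); simpl in *; subst be.
  exists (Mat al e ga de); split.
  - unfold lift; simpl; f_equal; ring.
  - split.
    + apply det1_lift_push; unfold det1 in *; simpl in *; rewrite <- Hdet; ring.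
    + simpl; rewrite (Z.mul_comm d ga); now apply Z.mul_divide_mono_r.
Qed.

Lemma Gamma0_push k d M :
  Gamma0 (k * d) M -> exists M0, M = push d M0 /\ Gamma00 k d (lift d M0).
Proof.
  destruct M as [al be ga de]; intros (Hdet & [g Hg]); simpl in *; subst ga.
  exists (Mat al be (g * k) de); split.
  - unfold push; simpl; f_equal; ring.
  - split; [|split].
    + apply det1_lift_push; unfold det1 in *; simpl in *; rewrite <- Hdet; ring.
    + exists g; reflexivity.
    + exists be; simpl; ring.
Qed.

Definition rescaled (d : Z) (P P' : form) : Prop :=
  fa P = d * fa P' /\ fb P = fb P' /\ fc P' = d * fc P.

Lemma feval_stretch d P P' x y :
  rescaled d P P' -> feval P x (d * y) = d * feval P' x y.
Proof.
  destruct P as [p q r], P' as [p' q' r']; unfold rescaled, feval; simpl.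
  intros (-> & -> & ->); ring.
Qed.

Definition form_comp (P : form) (M : mat) : form :=
  Form (feval P (m11 M) (m21 M))
       (2 * fa P * m11 M * m12 M + fb P * (m11 M * m22 M + m12 M * m21 M)
        + 2 * fc P * m21 M * m22 M)
       (feval P (m12 M) (m22 M)).

Lemma feval_comp P M x y :
  feval (form_comp P M) x y = feval P (m11 M * x + m12 M * y) (m21 M * x + m22 M * y).
Proof. unfold form_comp, feval; cbn [fa fb fc]; ring. Qed.

(* The values at (1, 0), (0, d) and (1, d) already determine the coefficients. *)
Lemma feval_ext_stretch d P P' :
  d <> 0 -> (forall x y, feval P x (d * y) = feval P' x (d * y)) ->
  forall x y, feval P x y = feval P' x y.
Proof.
  destruct P as [p q r], P' as [p' q' r']; unfold feval; simpl.
  intros Hd H x y.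
  pose proof (H 1 0) as H10; pose proof (H 0 1) as H01; pose proof (H 1 1) as H11.
  assert (Ha : p = p') by lia.
  assert (Hc : r = r').
  { apply Z.mul_reg_l with (d * d); [nia | lia]. }
  assert (Hb : q = q').
  { apply Z.mul_reg_l with d; [assumption | lia]. }
  now subst.
Qed.

Section Rescaling.

Variables (d : Z) (P P' : form).
Hypotheses (Hd : d <> 0) (HP : rescaled d P P').

Lemma fixes_push_lift M : fixes P (push d M) <-> fixes P' (lift d M).
Proof.
  assert (Hconj : forall x y,
    feval P (m11 (push d M) * x + m12 (push d M) * (d * y))
            (m21 (push d M) * x + m22 (push d M) * (d * y))
    = d * feval P' (m11 (lift d M) * x + m12 (lift d M) * y)
                   (m21 (lift d M) * x + m22 (lift d M) * y)).
  { intros x y; rewrite <- feval_stretch with (P := P) by exact HP.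
    simpl; f_equal; ring. }
  split; intros Hfix x y.
  - apply Z.mul_reg_l with d; [assumption|].
    now rewrite <- Hconj, Hfix, feval_stretch with (P' := P').
  - rewrite <- feval_comp.
    revert x y; apply feval_ext_stretch with d; [assumption|].
    intros x y; rewrite feval_comp, Hconj, Hfix.
    now rewrite feval_stretch with (P' := P').
Qed.

Lemma orbit_rel_stretch k w w' :
  orbit_rel (Gamma00 k d) P' w w' ->
  orbit_rel (Gamma0 (k * d)) P (stretch d w) (stretch d w').
Proof.
  intros (M & HM & Hfix & ->).
  destruct (Gamma00_lift _ _ _ HM) as (M0 & -> & HM0).
  exists (push d M0); split; [exact HM0 | split].
  - now apply fixes_push_lift.
  - apply stretch_act_lift.
Qed.

Lemma orbit_rel_unstretch k w w' :
  orbit_rel (Gamma0 (k * d)) P (stretch d w) (stretch d w') ->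
  orbit_rel (Gamma00 k d) P' w w'.
Proof.
  intros (M & HM & Hfix & Hw').
  destruct (Gamma0_push _ _ _ HM) as (M0 & -> & HM0).
  exists (lift d M0); split; [exact HM0 | split].
  - now apply fixes_push_lift.
  - apply stretch_inj with d; [assumption|].
    now rewrite stretch_act_lift.
Qed.

End Rescaling.

Lemma gcd_stretch d k v : 0 < d -> Z.gcd (d * v) (k * d) = d * Z.gcd v k.
Proof.
  intros Hd; rewrite (Z.mul_comm k d), Z.gcd_mul_mono_l, Z.abs_eq; lia.
Qed.

Theorem lemma6p3 (N D a b c d : Z) :
  1 <= N -> 0 < D -> fundamental_disc D -> (4 * N | D - 1) ->
  b * b - 4 * (N * a) * c = D -> (2 * N | b - 1) ->
  0 < d -> (d | N) ->
  let Q := Form (N * a) b c in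
  let Qd := Form ((N / d) * a) b (c * d) in
  let A := fun w : Z * Z => 0 < feval Qd (fst w) (snd w) /\ Z.gcd (snd w) (N / d) = 1 in
  let B := fun w : Z * Z => 0 < feval Q (fst w) (snd w) /\ Z.gcd (snd w) N = d in
  let f := fun w : Z * Z => (fst w, d * snd w) in
  (forall w, A w -> B (f w)) /\
  (forall w w', A w -> A w' ->
     orbit_rel (Gamma00 (N / d) d) Qd w w' -> orbit_rel (Gamma0 N) Q (f w) (f w')) /\
  (forall w w', A w -> A w' ->
     orbit_rel (Gamma0 N) Q (f w) (f w') -> orbit_rel (Gamma00 (N / d) d) Qd w w') /\
  (forall w', B w' -> exists w, A w /\ orbit_rel (Gamma0 N) Q (f w) w').
Proof.
  intros _ _ _ _ _ _ Hd [k ->] Q Qd A B f; subst Q Qd A B f.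
  rewrite Z.div_mul by lia.
  set (Q := Form (k * d * a) b c); set (Qd := Form (k * a) b (c * d)).
  assert (HQ : rescaled d Q Qd) by (repeat split; simpl; ring).
  assert (Hd0 : d <> 0) by lia.
  split; [|split; [|split]].
  - intros [u v] [Hpos Hg]; simpl in *; split.
    + rewrite feval_stretch with (P' := Qd) by exact HQ; lia.
    + rewrite gcd_stretch, Hg; lia.
  - intros w w' _ _; now apply orbit_rel_stretch.
  - intros w w' _ _; now apply orbit_rel_unstretch.
  - intros [u v'] [Hpos Hg]; simpl in *.
    assert (Hdv : (d | v')) by (rewrite <- Hg; apply Z.gcd_divide_l).
    destruct Hdv as [v ->]; rewrite (Z.mul_comm v d) in *.
    exists (u, v); simpl; split; [split|].
    + rewrite feval_stretch with (P' := Qd) in Hpos by exact HQ.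
      now apply Z.mul_pos_cancel_l with d.
    + rewrite gcd_stretch in Hg by assumption.
      apply Z.mul_reg_l with d; lia.
    + exists (Mat 1 0 0 1); split; [split; [reflexivity | apply Z.divide_0_r] | split].
      * intros x y; cbn [m11 m12 m21 m22]; f_equal; ring.
      * unfold act; cbn [fst snd m11 m12 m21 m22]; f_equal; ring.
Qed.
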